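(* Every pair of elements of $\mathrm{PSp}(1)$ is strongly doubly reversible.
   Context: $\mathrm{Sp}(1)$ is the group of unit quaternions and $\mathrm{PSp}(1)=\mathrm{Sp}(1)/\{\pm 1\}$. A pair $(g_1,g_2)$ in a group $G$ is strongly doubly reversible if there is $g\in G$ with $g^2=1$ such that $g g_1 g^{-1}=g_1^{-1}$ and $g g_2 g^{-1}=g_2^{-1}$. *)

From HB Require Import structures.
From mathcomp Require Import all_boot all_order all_algebra.
From mathcomp Require Import reals.
Set Implicit Arguments. Unset Strict Implicit. Unset Printing Implicit Defensive.
Import Order.TTheory GRing.Theory Num.Theory.
Local Open Scope ring_scope.

(* Real quaternions a + b i + c j + d k *)
Record quat (R : realType) := Quat { qa : R; qb : R; qc : R; qd : R }.

Section Quat.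
Variable R : realType.
Implicit Types p q : quat R.

Definition qone : quat R := Quat 1 0 0 0.
Definition qopp q : quat R := Quat (- qa q) (- qb q) (- qc q) (- qd q).
(* Hamilton product, i^2 = j^2 = k^2 = ijk = -1 *)
Definition qmul p q : quat R :=
  Quat (qa p * qa q - qb p * qb q - qc p * qc q - qd p * qd q)
       (qa p * qb q + qb p * qa q + qc p * qd q - qd p * qc q)
       (qa p * qc q - qb p * qd q + qc p * qa q + qd p * qb q)
       (qa p * qd q + qb p * qc q - qc p * qb q + qd p * qa q).
Definition qnorm2 q : R := qa q ^+ 2 + qb q ^+ 2 + qc q ^+ 2 + qd q ^+ 2.
Definition qconj q : quat R := Quat (qa q) (- qb q) (- qc q) (- qd q).
Definition qinv q : quat R :=
  let n := (qnorm2 q)^-1 in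
  Quat (qa (qconj q) * n) (qb (qconj q) * n) (qc (qconj q) * n) (qd (qconj q) * n).

Definition in_Sp1 q : Prop := qnorm2 q = 1.

(* Equality in PSp(1) = Sp(1)/{1,-1} of the classes of two unit quaternions *)
Definition PSp1_eq p q : Prop := p = q \/ p = qopp q.

Definition PSp1_strongly_doubly_reversible g1 g2 : Prop :=
  exists g : quat R, in_Sp1 g /\
    PSp1_eq (qmul g g) qone /\
    PSp1_eq (qmul (qmul g g1) (qinv g)) (qinv g1) /\
    PSp1_eq (qmul (qmul g g2) (qinv g)) (qinv g2).
End Quat.

(* A pure unit quaternion w squares to -1, so its class in PSp(1) is an
   involution.  Conjugation by w is the rotation by pi about w: it fixes the
   real part and negates every imaginary part orthogonal to w, so it maps a
   unit quaternion whose imaginary part is orthogonal to w to its conjugate,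
   i.e. to its inverse.  The imaginary parts of g1 and g2 span at most a plane
   of R^3, and any unit vector w orthogonal to that plane reverses both. *)
From mathcomp Require Import all_boot all_order all_algebra.
From mathcomp Require Import reals.
From mathcomp Require Import ring.
Set Implicit Arguments. Unset Strict Implicit. Unset Printing Implicit Defensive.
Import Order.TTheory GRing.Theory Num.Theory.
Local Open Scope ring_scope.

Lemma exists_left_kernel_neq0 (F : fieldType) m n (A : 'M[F]_(m, n)) : (n < m)%N ->
  exists2 v : 'rV_m, v != 0 & v *m A = 0.
Proof.
move=> lt_nm; exists (nz_row (kermx A)); last exact/sub_kermxP/nz_row_sub.
rewrite nz_row_eq0 -mxrank_eq0 mxrank_ker subn_eq0 -ltnNge.
exact: leq_ltn_trans (rank_leq_col A) lt_nm.
Qed.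

Lemma exists_left_kernel_unit (R : rcfType) m n (A : 'M[R]_(m, n)) : (n < m)%N ->
  exists2 v : 'rV_m, \sum_i v 0 i ^+ 2 = 1 & v *m A = 0.
Proof.
move=> lt_nm; have [v v_neq0 vA0] := exists_left_kernel_neq0 A lt_nm.
set s := \sum_i v 0 i ^+ 2.
have s_gt0 : 0 < s.
  rewrite lt_def sumr_ge0 ?andbT => [|i _]; last exact: sqr_ge0.
  apply: contraNneq v_neq0 => /psumr_eq0P v0; apply/eqP/rowP => i.
  by apply/eqP; rewrite mxE -sqrf_eq0 v0 // => j _; exact: sqr_ge0.
exists ((Num.sqrt s)^-1 *: v); last by rewrite -scalemxAl vA0 scaler0.
under eq_bigr do rewrite mxE exprMn.
by rewrite -mulr_sumr exprVn sqr_sqrtr ?ltW // mulVf ?gt_eqF.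
Qed.

Lemma sum_ord3 (V : nmodType) (f : 'I_3 -> V) : \sum_i f i = f 0 + f 1 + f 2.
Proof.
by rewrite !big_ord_recr big_ord0 /= add0r; congr (f _ + f _ + f _); exact: val_inj.
Qed.

Section PureQuaternions.
Variable R : realType.
Implicit Types p q w : quat R.

Definition qimdot p q := qb p * qb q + qc p * qc q + qd p * qd q.
Definition qim q : 'cV[R]_3 := \col_i [:: qb q; qc q; qd q]`_i.
Definition qpure (v : 'rV[R]_3) : quat R := Quat 0 (v 0 0) (v 0 1) (v 0 2).

Lemma qimdot_qpure v q : qimdot (qpure v) q = (v *m qim q) 0 0.
Proof. by rewrite mxE sum_ord3 !mxE. Qed.

Lemma qnorm2_qpure v : qnorm2 (qpure v) = \sum_i v 0 i ^+ 2.
Proof. by rewrite sum_ord3 /qnorm2 expr0n add0r. Qed.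

Lemma exists_pure_unit_orthogonal p q :
  exists w, [/\ qa w = 0, qnorm2 w = 1, qimdot w p = 0 & qimdot w q = 0].
Proof.
have [v v_unit] := @exists_left_kernel_unit R _ _ (row_mx (qim p) (qim q)) isT.
rewrite mul_mx_row -[0]hsubmxK => /eq_row_mx[vp0 vq0].
exists (qpure v); split; first by [].
- by rewrite qnorm2_qpure.
- by rewrite qimdot_qpure vp0 !mxE.
- by rewrite qimdot_qpure vq0 !mxE.
Qed.

Lemma qinv_unit q : qnorm2 q = 1 -> qinv q = qconj q.
Proof. by case: q => a b c d; rewrite /qinv => ->; rewrite invr1 /= !mulr1. Qed.

Lemma qmul_pure_unit_self w : qa w = 0 -> qnorm2 w = 1 -> qmul w w = qopp (qone R).
Proof.
case: w => a b c d /= -> w1; rewrite /qmul /qopp /=; congr Quat; try ring.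
by rewrite -w1 /qnorm2 /=; ring.
Qed.

Lemma qmul_pure_conj w q : qa w = 0 ->
  qmul (qmul w q) (qconj w) =
  Quat (qnorm2 w * qa q) (2 * qimdot w q * qb w - qnorm2 w * qb q)
       (2 * qimdot w q * qc w - qnorm2 w * qc q)
       (2 * qimdot w q * qd w - qnorm2 w * qd q).
Proof.
case: w => a b c d /= ->; case: q => a' b' c' d'.
by rewrite /qmul /qnorm2 /qimdot /=; congr Quat; ring.
Qed.

Lemma qmul_pure_unit_orthogonal w q : qa w = 0 -> qnorm2 w = 1 -> qimdot w q = 0 ->
  qmul (qmul w q) (qinv w) = qconj q.
Proof.
move=> w_pure w_unit wq0; rewrite qinv_unit // qmul_pure_conj // w_unit wq0.
by rewrite !mul1r mulr0 !mul0r !sub0r.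
Qed.
End PureQuaternions.

Theorem theorem3p3 (R : realType) (g1 g2 : quat R) :
  in_Sp1 g1 -> in_Sp1 g2 -> PSp1_strongly_doubly_reversible g1 g2.
Proof.
move=> g1_unit g2_unit.
have [w [w_pure w_unit wg1 wg2]] := exists_pure_unit_orthogonal g1 g2.
exists w; split; first exact: w_unit.
split; first by right; exact: qmul_pure_unit_self.
by split; left; rewrite qmul_pure_unit_orthogonal // qinv_unit.
Qed.
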